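(* Let $q$ be an odd prime power, $n\ge3$ an odd integer, $s$ an integer with $\gcd(s,2n)=1$, and $\gamma\in\mathbb{F}_{q^{2n}}$ with $\mathrm{N}_{q^{2n}/q}(\gamma)$ a non-square in $\mathbb{F}_q$. Let $\tilde{\mathcal{H}}_s$ be the code $$\Big\{bx^{q^{2s\frac{n+1}{2}}}+a\gamma x^{q^{2s\frac{n-1}{2}}}+(a\gamma)^{q^{s(n+2)}}x^{q^{2s\frac{n+3}{2}}}+\sum_{i=1}^{\frac{n-3}{2}}\Big(c_ix^{q^{2si}}+c_i^{q^{s(2n-2i+1)}}x^{q^{2s(n-i+1)}}\Big): a,b\in\mathbb{F}_{q^n},\ c_i\in\mathbb{F}_{q^{2n}}\Big\}.$$ Then its dual code is $$\tilde{\mathcal{H}}_s^\perp=\Big\{c\gamma^{-1}\alpha x^{q^{2s\frac{n-1}{2}}}+(c\gamma^{-1}\alpha)^{q^{s(n+2)}}x^{q^{2s\frac{n+3}{2}}}: c\in\mathbb{F}_{q^n}\Big\},$$ where $\alpha\in\mathbb{F}_{q^{2n}}$ satisfies $\alpha^{q-1}=-1$.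
   Context: Polynomials are linearized polynomials over $\mathbb{F}_{q^{2n}}$ taken modulo $x^{q^{2n}}-x$, written as $\sum_{i=0}^{n-1}a_ix^{q^{2i}}$ (exponents of the form $q^{2si}$ are reduced modulo $q^{2n}$). The paper's ambient space of Hermitian forms is $\mathcal{H}_n(q^2)=\{\sum_{i=0}^{n-1}c_ix^{q^{2i}}: c_{n-i+1}=c_i^{q^{2n-2i+1}},\ i\in\{0,\dots,n-1\}\}$ (indices modulo $n$), of size $q^{n^2}$, with the pairing $b(f,g)=\mathrm{Tr}_{q^{2n}/q^2}\big(\sum_{i=0}^{n-1}a_ib_i\big)$ for $f=\sum a_ix^{q^{2i}}$, $g=\sum b_ix^{q^{2i}}$, where $\mathrm{Tr}_{q^{2n}/q^2}(x)=\sum_{i=0}^{n-1}x^{q^{2i}}$. The dual of an $\mathbb{F}_q$-linear code $\mathcal{C}$ is $\mathcal{C}^\perp=\{f\in\mathcal{H}_n(q^2): b(f,g)=0\ \forall g\in\mathcal{C}\}$, of size $q^{n^2}/|\mathcal{C}|$. $\mathrm{N}_{q^{2n}/q}(x)=x^{(q^{2n}-1)/(q-1)}$.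
   Formalization: The ambient space $\mathcal{H}_n(q^2)$, in which the dual is taken, requires the coefficient of $x^{q^{2s(n-i+1)}}$ to be the $q^{s(2n-2i+1)}$-th power of the coefficient of $x^{q^{2si}}$, in place of $c_{n-i+1}=c_i^{q^{2n-2i+1}}$. The statement above fails without it. *)

From HB Require Import structures.
From mathcomp Require Import all_boot all_order all_algebra.
Set Implicit Arguments. Unset Strict Implicit. Unset Printing Implicit Defensive.
Import GRing.Theory.
Local Open Scope ring_scope.

(* F plays the role of F_{q^{2n}}.  A linearized polynomial
   sum_{i<n} a_i x^{q^{2i}} (taken mod x^{q^{2n}} - x) is represented by its
   coefficient vector a : {ffun 'I_n -> F}. *)

(* Frobenius power x |-> x^{q^m} for an integer m (reduced mod 2n, since
   x^{q^{2n}} = x on F_{q^{2n}}). *)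
Definition frob (F : finFieldType) (q n : nat) (m : int) (x : F) : F :=
  x ^+ (q ^ `|(m %% (2 * n)%:Z)%Z|%N).

(* index of x^{q^{2m}} after reduction of exponents modulo q^{2n} *)
Definition idx (n : nat) (m : int) : nat := `|(m %% n%:Z)%Z|%N.

Definition mono (F : finFieldType) (n : nat) (m : int) (c : F) : {ffun 'I_n -> F} :=
  [ffun j : 'I_n => if (j : nat) == idx n m then c else 0].

Definition trq2 (F : finFieldType) (q n : nat) (x : F) : F :=
  \sum_(i < n) x ^+ (q ^ (2 * i)).

Definition norm_q2n_q (F : finFieldType) (q n : nat) (x : F) : F :=
  x ^+ ((q ^ (2 * n) - 1) %/ (q - 1)).

Definition pairing (F : finFieldType) (q n : nat) (f g : {ffun 'I_n -> F}) : F :=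
  @trq2 F q n (\sum_(i < n) f i * g i).

(* Ambient space of Hermitian forms, written with respect to sigma = q^{2s}:
   coefficient of x^{q^{2s(n-i+1)}} = (coefficient of x^{q^{2si}})^{q^{s(2n-2i+1)}}.
   For s = 1 this is literally H_n(q^2) = { c_{n-i+1} = c_i^{q^{2n-2i+1}} }. *)
Definition hermitian_s (F : finFieldType) (q n : nat) (s : int)
    (f : {ffun 'I_n -> F}) : Prop :=
  forall i j k : 'I_n,
    (j : nat) = idx n (s * (n%:Z - (i : nat)%:Z + 1)) ->
    (k : nat) = idx n (s * (i : nat)%:Z) ->
    f j = @frob F q n (s * (2 * n%:Z - 2 * (i : nat)%:Z + 1)) (f k).

Definition Hs_elem (F : finFieldType) (q n : nat) (s : int) (gamma a b : F)
    (c : nat -> F) : {ffun 'I_n -> F} :=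
  @mono F n (s * ((n + 1)./2)%:Z) b
  + @mono F n (s * ((n - 1)./2)%:Z) (a * gamma)
  + @mono F n (s * ((n + 3)./2)%:Z) (@frob F q n (s * (n + 2)%:Z) (a * gamma))
  + \sum_(1 <= i < ((n - 3)./2).+1)
      (@mono F n (s * i%:Z) (c i)
       + @mono F n (s * (n%:Z - i%:Z + 1))
           (@frob F q n (s * (2 * n%:Z - 2 * i%:Z + 1)) (c i))).

Definition in_Hs (F : finFieldType) (q n : nat) (s : int) (gamma : F)
    (g : {ffun 'I_n -> F}) : Prop :=
  exists (a b : F) (c : nat -> F),
    a ^+ (q ^ n) = a /\ b ^+ (q ^ n) = b /\ g = @Hs_elem F q n s gamma a b c.

Definition in_dual_Hs (F : finFieldType) (q n : nat) (s : int) (gamma : F)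
    (f : {ffun 'I_n -> F}) : Prop :=
  @hermitian_s F q n s f /\
  forall g, @in_Hs F q n s gamma g -> @pairing F q n f g = 0.

Definition dual_elem (F : finFieldType) (q n : nat) (s : int) (gamma alpha c : F)
    : {ffun 'I_n -> F} :=
  @mono F n (s * ((n - 1)./2)%:Z) (c * gamma^-1 * alpha)
  + @mono F n (s * ((n + 3)./2)%:Z) (@frob F q n (s * (n + 2)%:Z) (c * gamma^-1 * alpha)).

From HB Require Import structures.
From mathcomp Require Import all_boot all_order all_algebra all_field zify ring.
Set Implicit Arguments. Unset Strict Implicit. Unset Printing Implicit Defensive.
Import GRing.Theory.
Local Open Scope ring_scope.

(* Write n = 2m + 1 and let f_t be the coefficient of x^(q^(2st)), 1 <= t <= n.
   Pairing f with the code elements having a single nonzero parameter isolates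
   the coefficients of f.  Through the Hermitian relation
   f_(n-t+1) = f_t^(q^(s(2n-2t+1))), whose Frobenius exponent is odd, the
   parameter c_t contributes Tr_(q^2n/q)(f_t c_t), so f_t = 0 for t < m, and
   then for t > m + 2.  The relation for t = m + 1 puts f_(m+1) in F_(q^n),
   where Tr_(q^2n/q^2) is nondegenerate because n is odd, so the parameter b
   kills it.  The parameter a says that f_m gamma is Tr_(q^2n/q)-orthogonal to
   F_(q^n), i.e. (f_m gamma)^(q^n) = - f_m gamma, which means
   f_m = c gamma^-1 alpha with c in F_(q^n).  The converse is the same
   computation.  Nondegeneracy of the traces holds because the trace
   polynomial has degree q^(2n-1) < |F|. *)

Lemma exprqn_mod (R : pzSemiRingType) (q N k : nat) (y : R) :
  y ^+ (q ^ N) = y -> y ^+ (q ^ k) = y ^+ (q ^ (k %% N)).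
Proof.
move=> yN; rewrite {1}(divn_eq k N) expnD exprM; congr (_ ^+ _).
elim: (k %/ N)%N => [|j IHj]; first by rewrite expr1.
by rewrite mulSn expnD exprM yN IHj.
Qed.

(** * Frobenius powers and traces *)

Section FrobeniusTrace.

Variables (F : finFieldType) (q n : nat).
Hypothesis q_pchar : [pchar F].-nat q.
Hypothesis card_F : #|F| = (q ^ (2 * n))%N.

Let q_gt0 : (0 < q)%N.
Proof. by case/andP: q_pchar. Qed.

Let q_gt1 : (1 < q)%N.
Proof.
have := card_finNzRing_gt1 F; rewrite card_F.
by case: q q_gt0 => [|[|q']] //; rewrite exp1n.
Qed.

Let n_gt0 : (0 < n)%N.
Proof. by have := card_finNzRing_gt1 F; rewrite card_F; case: n. Qed.

Lemma exprqnD k (x y : F) : (x + y) ^+ (q ^ k) = x ^+ (q ^ k) + y ^+ (q ^ k).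
Proof. by apply: exprDn_pchar; rewrite pnatX q_pchar. Qed.

Lemma exprqn0 k : (0 : F) ^+ (q ^ k) = 0.
Proof. by rewrite expr0n expn_eq0 (gtn_eqF q_gt0). Qed.

Lemma exprqn_sum k (I : finType) (G : I -> F) :
  (\sum_i G i) ^+ (q ^ k) = \sum_i G i ^+ (q ^ k).
Proof. exact: (big_morph (fun x : F => x ^+ (q ^ k)) (exprqnD k) (exprqn0 k)). Qed.

Lemma exprq2n (x : F) : x ^+ (q ^ (2 * n)) = x.
Proof. by rewrite -card_F expf_card. Qed.

Lemma frobE (m : int) k (x : F) :
  (k%:Z = m %[mod (2 * n)%:Z])%Z -> frob q n m x = x ^+ (q ^ k).
Proof.
by move=> km; rewrite /frob [RHS](exprqn_mod k (exprq2n x)) -km modz_nat.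
Qed.

Lemma frob_congr (m1 m2 : int) :
  (m1 = m2 %[mod (2 * n)%:Z])%Z -> @frob F q n m1 =1 frob q n m2.
Proof. by rewrite /frob => ->. Qed.

Lemma frob0 (m : int) : frob q n m (0 : F) = 0.
Proof. exact: exprqn0. Qed.

Lemma frobM (m : int) (x y : F) : frob q n m (x * y) = frob q n m x * frob q n m y.
Proof. exact: exprMn. Qed.

Let mod2n_ge0 (e : int) : (0 <= e %% (2 * n)%:Z)%Z.
Proof. by rewrite modz_ge0 // eqz_nat muln_eq0 -lt0n n_gt0. Qed.

Lemma frob_frob (m1 m2 : int) (x : F) :
  frob q n m1 (frob q n m2 x) = frob q n (m1 + m2) x.
Proof.
rewrite /frob -exprM -expnD addnC; symmetry; apply: frobE.
by rewrite PoszD !gez0_abs ?mod2n_ge0 // modzDm.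
Qed.

Lemma frob_id (m : int) (x : F) : (m = 0 %[mod (2 * n)%:Z])%Z -> frob q n m x = x.
Proof. by move=> m0; rewrite (@frobE m 0) ?expr1 // m0. Qed.

Lemma trq2D (x y : F) : trq2 q n (x + y) = trq2 q n x + trq2 q n y.
Proof. by rewrite /trq2 -big_split; apply: eq_bigr => i _; rewrite exprqnD. Qed.

Lemma trq2_exprqn k (x : F) : trq2 q n (x ^+ (q ^ k)) = trq2 q n x ^+ (q ^ k).
Proof. by rewrite /trq2 exprqn_sum; apply: eq_bigr => i _; rewrite -!exprM mulnC. Qed.

Lemma trq2_exprq2 (x : F) : trq2 q n (x ^+ (q ^ 2)) = trq2 q n x.
Proof.
pose f i := x ^+ (q ^ (2 * i)).
have : \sum_(i < n) f i + f n = f 0%N + \sum_(i < n) f i.+1.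
  transitivity (\sum_(i < n.+1) f i); first by rewrite big_ord_recr.
  by rewrite big_ord_recl; under eq_bigr do rewrite lift0.
rewrite /f exprq2n muln0 expr1 addrC /trq2 => /addrI ->.
by apply: eq_bigr => i _; rewrite -exprM -expnD mulnS.
Qed.

Lemma trq2_exprqn_odd k (x : F) : trq2 q n x ^+ (q ^ k) = trq2 q n x ^+ (q ^ odd k).
Proof.
have trq2_q2 : trq2 q n x ^+ (q ^ 2) = trq2 q n x by rewrite -trq2_exprqn trq2_exprq2.
by rewrite (exprqn_mod k trq2_q2) modn2.
Qed.

(* Tr_{q^2n/q} = Tr_{q^2/q} o Tr_{q^2n/q^2} *)
Definition trq (x : F) : F := trq2 q n x + trq2 q n x ^+ q.

Lemma trqD (x y : F) : trq (x + y) = trq x + trq y.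
Proof. by rewrite /trq trq2D exprDn_pchar // [LHS]addrACA. Qed.

Lemma trq0 : trq 0 = 0.
Proof. by apply: (addIr (trq 0)); rewrite -trqD addr0 add0r. Qed.

Lemma trqN (x : F) : trq (- x) = - trq x.
Proof. by apply/eqP; rewrite -addr_eq0 -trqD addNr trq0. Qed.

Lemma trq_exprqn k (x : F) : trq (x ^+ (q ^ k)) = trq x.
Proof.
rewrite /trq trq2_exprqn -exprM -expnSr (trq2_exprqn_odd k) (trq2_exprqn_odd k.+1) /=.
by case: (odd k); rewrite ?expn1 ?expr1 // addrC.
Qed.

Lemma trq2_add_frob_odd (e : int) (x : F) :
  (e %% 2 = 1)%Z -> trq2 q n (x + frob q n e x) = trq x.
Proof.
move=> e_odd; set k := `|(e %% (2 * n)%:Z)%Z|%N.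
have ek : (k%:Z = e %[mod (2 * n)%:Z])%Z by rewrite gez0_abs ?mod2n_ge0 ?modz_mod.
suff k_odd : odd k by rewrite trq2D (frobE _ ek) trq2_exprqn trq2_exprqn_odd k_odd.
have : (k%:Z = e %% (2 * n)%:Z)%Z by rewrite gez0_abs ?mod2n_ge0.
lia.
Qed.

Lemma trq_sum (x : F) :
  trq x = \sum_(i < n) (x ^+ (q ^ (2 * i)) + x ^+ (q ^ (2 * i).+1)).
Proof.
rewrite /trq; have -> : trq2 q n x ^+ q = trq2 q n x ^+ (q ^ 1) by rewrite expn1.
rewrite exprqn_sum /trq2 -big_split /=.
by apply: eq_bigr => i _; rewrite -exprM expn1 -expnSr.
Qed.

Lemma trq_nondeg : exists y : F, trq y != 0.
Proof.
pose P : {poly F} := \sum_(i < n) ('X^(q ^ (2 * i)) + 'X^(q ^ (2 * i).+1)).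
have [n' n_eq] : exists n', n = n'.+1 by exists n.-1; rewrite prednK ?n_gt0.
have sizeP : size P = (q ^ (2 * n').+1).+1.
  rewrite /P n_eq big_ord_recr /= addrA addrC size_polyDl size_polyXn //.
  rewrite ltnS; apply: leq_trans (size_polyD _ _) _; rewrite geq_max.
  rewrite size_polyXn ltn_exp2l ?q_gt1 // ?ltnSn andbT.
  apply: leq_trans (size_sum _ _ _) _; apply/bigmax_leqP => i _.
  apply: leq_trans (size_polyD _ _) _; rewrite geq_max !size_polyXn !ltn_exp2l ?q_gt1 //.
  by have := ltn_ord i; lia.
have P_neq0 : P != 0 by rewrite -size_poly_eq0 sizeP.
apply/existsP; apply: contraT; rewrite negb_exists => /forallP /= trq_eq0.
have roots : all (root P) (enum F).
  apply/allP => y _; rewrite /root /P horner_sum.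
  under eq_bigr do rewrite hornerD !hornerXn.
  by rewrite -trq_sum; apply: negbNE.
have := max_poly_roots P_neq0 roots (enum_uniq _).
by rewrite -cardE card_F sizeP ltnS leqNgt n_eq ltn_exp2l ?q_gt1 // mulnS addSn ltnSn.
Qed.

Lemma trq_mul_eq0 (u : F) : (forall x, trq (u * x) = 0) -> u = 0.
Proof.
move=> trq_u; apply/eqP; apply: contraT => u_neq0.
have [y] := trq_nondeg; apply: contra_neqT => _.
by rewrite -(trq_u (u^-1 * y)) mulrA mulfV ?mul1r.
Qed.

Hypothesis two_neq0 : 2%:R != 0 :> F.

Lemma mulr2n_eq0 (x : F) : (x *+ 2 == 0) = (x == 0).
Proof. by rewrite -mulr_natr mulf_eq0 (negbTE two_neq0) orbF. Qed.

Lemma exprqnK (x : F) : x ^+ (q ^ n) ^+ (q ^ n) = x.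
Proof. by rewrite -exprM -expnD addnn -mul2n exprq2n. Qed.

Lemma trq_fixed_nondeg : exists2 v : F, v ^+ (q ^ n) = v & trq v != 0.
Proof.
have [y trq_y] := trq_nondeg.
exists (y + y ^+ (q ^ n)); first by rewrite exprqnD exprqnK addrC.
by rewrite trqD trq_exprqn -mulr2n mulr2n_eq0.
Qed.

Lemma trq_orth_fixedP (z : F) :
  (forall a, a ^+ (q ^ n) = a -> trq (z * a) = 0) <-> z ^+ (q ^ n) = - z.
Proof.
split=> [orth_z | z_anti a a_fixed].
  apply/eqP; rewrite -addr_eq0 addrC; set v := z + _.
  have v_fixed : v ^+ (q ^ n) = v by rewrite exprqnD exprqnK addrC.
  apply: contraT => v_neq0; have [v0 v0_fixed] := trq_fixed_nondeg.
  apply: contra_neqT => _; rewrite -[v0](mulVKf v_neq0).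
  have a_fixed : (v^-1 * v0) ^+ (q ^ n) = v^-1 * v0.
    by rewrite exprMn exprVn v_fixed v0_fixed.
  by rewrite mulrDl trqD orth_z // -a_fixed -exprMn trq_exprqn orth_z ?addr0.
apply/eqP; rewrite -mulr2n_eq0 mulr2n -{2}(trq_exprqn n) exprMn z_anti a_fixed.
by rewrite mulNr trqN subrr.
Qed.

Hypothesis n_odd : odd n.

Lemma trq_fixed (v : F) : v ^+ (q ^ n) = v -> trq v = trq2 q n v *+ 2.
Proof.
move=> v_fixed; rewrite /trq mulr2n; congr (_ + _).
by rewrite -{1}v_fixed trq2_exprqn -exprM -expnSr trq2_exprqn_odd /= n_odd expr1.
Qed.

Lemma trq2_fixed_mul_eq0 (u : F) : u ^+ (q ^ n) = u ->
  (forall b, b ^+ (q ^ n) = b -> trq2 q n (u * b) = 0) -> u = 0.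
Proof.
move=> u_fixed orth_u; apply/eqP; apply: contraT => u_neq0.
have [v0 v0_fixed] := trq_fixed_nondeg; apply: contra_neqT => _.
rewrite trq_fixed // -[v0](mulVKf u_neq0) orth_u ?mul0rn //.
by rewrite exprMn exprVn u_fixed v0_fixed.
Qed.

End FrobeniusTrace.

(** * Coefficient slots *)

Lemma sum_mul_ffunDr (R : pzSemiRingType) n (f g h : {ffun 'I_n -> R}) :
  \sum_j f j * (g + h) j = \sum_j f j * g j + \sum_j f j * h j.
Proof. by rewrite -big_split; apply: eq_bigr => j _; rewrite ffunE mulrDr. Qed.

Lemma sum_mul_ffun_sumr (R : pzSemiRingType) n (f : {ffun 'I_n -> R})
    (I : Type) (r : seq I) (P : pred I) (G : I -> {ffun 'I_n -> R}) :
  \sum_j f j * (\sum_(i <- r | P i) G i) j = \sum_(i <- r | P i) \sum_j f j * G i j.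
Proof. by rewrite exchange_big; apply: eq_bigr => j _; rewrite sum_ffunE mulr_sumr. Qed.

Section Positions.

Variables (n : nat) (s : int).
Hypothesis n_gt0 : (0 < n)%N.

Lemma idx_lt (m : int) : (idx n m < n)%N.
Proof. by rewrite /idx; lia. Qed.

(* The slot of the monomial x^(q^(2st)). *)
Definition pos (t : int) : 'I_n := Ordinal (idx_lt (s * t)).

Lemma pos_mod (a b : int) : (a = b %[mod n%:Z])%Z -> pos a = pos b.
Proof. by move=> ab; apply: val_inj; rewrite /= /idx -modzMmr ab modzMmr. Qed.

Hypothesis s_coprime : coprimez s n%:Z.

Lemma pos_inj (a b : int) :
  (1 <= a <= n%:Z)%R -> (1 <= b <= n%:Z)%R -> pos a = pos b -> a = b.
Proof.
move=> a_range b_range /(congr1 val) /= /eqP.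
have mod_ge0 (e : int) : (0 <= e %% n%:Z)%Z by rewrite modz_ge0 // eqz_nat -lt0n.
rewrite /idx -eqz_nat !gez0_abs ?mod_ge0 // eqz_mod_dvd -mulrBr.
rewrite Gauss_dvdzr; last by rewrite coprimez_sym.
case/dvdzP => k ab.
have [k0|[k_ge1|k_le1]] : k = 0 \/ (1 <= k)%R \/ (k <= -1)%R by lia.
- by apply/eqP; rewrite -subr_eq0 ab k0 mul0r.
- have : (n%:Z <= k * n%:Z)%R by nia.
  lia.
- have : (k * n%:Z <= - n%:Z)%R by nia.
  lia.
Qed.

Lemma pos_surj (j : 'I_n) : exists2 t : nat, (1 <= t <= n)%N & j = pos t%:Z.
Proof.
have pos_succ_inj : injective (fun i : 'I_n => pos i.+1%:Z).
  move=> i1 i2 /= eq12; apply/val_inj/eqP.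
  have i1_lt := ltn_ord i1; have i2_lt := ltn_ord i2.
  by rewrite -eqSS -eqz_nat (pos_inj _ _ eq12) //; lia.
have [g _ g_inv] := injF_bij pos_succ_inj.
by exists (g j).+1; [rewrite ltn_ord | rewrite g_inv].
Qed.

Lemma mono_pos (F : finFieldType) (u t : int) (c : F) :
    (1 <= u <= n%:Z)%R -> (1 <= t <= n%:Z)%R ->
  mono n (s * u) c (pos t) = if t == u then c else 0.
Proof.
move=> u_range t_range; rewrite ffunE; congr (if _ then _ else _).
by apply/eqP/eqP => [tu | -> //]; apply: pos_inj => //; apply: val_inj.
Qed.

Lemma sum_mul_mono (F : finFieldType) (f : {ffun 'I_n -> F}) (u : int) (c : F) :
  \sum_j f j * mono n (s * u) c j = f (pos u) * c.
Proof.
rewrite (bigD1 (pos u)) //= ffunE eqxx big1 ?addr0 // => j j_neq.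
rewrite ffunE; case: eqP => [ju|_]; last by rewrite mulr0.
by case/eqP: j_neq; apply: val_inj.
Qed.

(* Slot i = 0 of [hermitian_s] is read as t = n: the positions agree mod n and
   the Frobenius exponents mod 2n. *)
Lemma hermitian_sP (F : finFieldType) (q : nat) (f : {ffun 'I_n -> F}) :
  hermitian_s q s f <-> forall t : nat, (1 <= t <= n)%N ->
    f (pos (n%:Z - t%:Z + 1)) = frob q n (s * (2 * n%:Z - 2 * t%:Z + 1)) (f (pos t%:Z)).
Proof.
pose herm_at (u : int) :=
  f (pos (n%:Z - u + 1)) = frob q n (s * (2 * n%:Z - 2 * u + 1)) (f (pos u)).
have herm_shift (u k : int) : herm_at (u + k * n%:Z) = herm_at u.
  rewrite /herm_at [u + _]addrC (pos_mod (modzMDl _ _ _)).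
  have -> : n%:Z - (k * n%:Z + u) + 1 = - k * n%:Z + (n%:Z - u + 1) by ring.
  have -> : s * (2 * n%:Z - 2 * (k * n%:Z + u) + 1)
          = - (s * k) * (2 * n)%:Z + s * (2 * n%:Z - 2 * u + 1) by rewrite PoszM; ring.
  by rewrite (pos_mod (modzMDl _ _ _)) (frob_congr q (modzMDl _ _ _)).
have -> : hermitian_s q s f <-> forall i : 'I_n, herm_at i.
  split=> herm i; first exact: herm.
  move=> j k j_eq k_eq; have -> : j = pos (n%:Z - i%:Z + 1) by apply: val_inj.
  have -> : k = pos i by apply: val_inj.
  exact: herm.
split=> herm t.
  move=> _; change (herm_at t); rewrite (divn_eq t n) addnC PoszD PoszM herm_shift.
  exact: herm (Ordinal (ltn_pmod t n_gt0)).
have [t0|t_gt0] := posnP t; last by apply: herm; rewrite t_gt0 (ltnW (ltn_ord t)).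
change (herm_at t); rewrite t0 -(herm_shift 0 1) add0r mul1r.
by apply: herm; rewrite n_gt0 leqnn.
Qed.

End Positions.

(** * The dual code *)

Section DualCode.

Variables (F : finFieldType) (q n m : nat) (s : int) (gamma alpha : F).
Hypothesis q_pchar : [pchar F].-nat q.
Hypothesis card_F : #|F| = (q ^ (2 * n))%N.
Hypothesis n_eq : n = (2 * m).+1.
Hypothesis m_gt0 : (0 < m)%N.
Hypothesis s_coprime : coprimez s (2 * n)%:Z.

Let n_gt0 : (0 < n)%N. Proof. by rewrite n_eq. Qed.

Let n_odd : odd n. Proof. by rewrite n_eq; lia. Qed.

Let s_coprime_n : coprimez s n%:Z.
Proof. by move: s_coprime; rewrite PoszM coprimezMr => /andP[]. Qed.

Let s_odd : (s %% 2 = 1)%Z.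
Proof.
move: s_coprime; rewrite PoszM coprimezMr => /andP[s_coprime2 _].
by move: s_coprime2; rewrite /coprimez /gcdz eqz_nat -/(coprime _ 2) coprimen2; lia.
Qed.

Let s_mulz_odd (x : int) : (x %% 2 = 1)%Z -> ((s * x) %% 2 = 1)%Z.
Proof. by move=> x_odd; rewrite -modzMm s_odd x_odd. Qed.

Let frob_sn (x : F) : frob q n (s * n%:Z) x = x ^+ (q ^ n).
Proof.
apply: (frobE card_F); rewrite [s in s * _](divz_eq s 2) s_odd mulrDl mul1r.
by rewrite PoszM -mulrA modzMDl.
Qed.

Let sigma_odd : ((s * (n + 2)%:Z) %% 2 = 1)%Z.
Proof. by apply: s_mulz_odd; rewrite n_eq; lia. Qed.

Let halves : ((n + 1)./2 = m.+1) * ((n - 1)./2 = m) * ((n + 3)./2 = m.+2)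
  * (((n - 3)./2).+1 = m).
Proof. by rewrite n_eq; do !split; lia. Qed.

Local Notation pos := (pos s n_gt0).
Local Notation sigma := (frob q n (s * (n + 2)%:Z)).
Local Notation tau i := (frob q n (s * (2 * n%:Z - 2 * i + 1))).

Lemma pairing_Hs_elem (f : {ffun 'I_n -> F}) (a b : F) (c : nat -> F) :
  pairing q f (Hs_elem q n s gamma a b c) =
  trq2 q n (f (pos m.+1%:Z) * b + f (pos m%:Z) * (a * gamma)
            + f (pos m.+2%:Z) * sigma (a * gamma)
            + \sum_(1 <= i < m)
                (f (pos i%:Z) * c i + f (pos (n%:Z - i%:Z + 1)) * tau i%:Z (c i))).
Proof.
rewrite /pairing /Hs_elem !halves !sum_mul_ffunDr sum_mul_ffun_sumr !sum_mul_mono.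
by under eq_bigr do rewrite sum_mul_ffunDr !sum_mul_mono.
Qed.

Lemma pairing_Hs_elem_ab (f : {ffun 'I_n -> F}) (a b : F) :
  pairing q f (Hs_elem q n s gamma a b (fun=> 0)) =
  trq2 q n (f (pos m.+1%:Z) * b + f (pos m%:Z) * (a * gamma)
            + f (pos m.+2%:Z) * sigma (a * gamma)).
Proof.
by rewrite pairing_Hs_elem big1 ?addr0 // => i _; rewrite (frob0 _ q_pchar) !mulr0 addr0.
Qed.

Section DualElem.

Variable c : F.
Local Notation d := (c * gamma^-1 * alpha).
Local Notation dual := (dual_elem q n s gamma alpha c).

Let dual_pos t : (1 <= t <= n)%N ->
  dual (pos t%:Z) = (if t == m then d else 0) + (if t == m.+2 then sigma d else 0).
Proof. by move=> t_range; rewrite /dual_elem ffunE !halves !mono_pos //; lia. Qed.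

Lemma dual_elem_pos_m : dual (pos m%:Z) = d.
Proof. by rewrite dual_pos ?eqxx ?(ltn_eqF (leqnSn m.+1)) ?addr0 //; lia. Qed.

Lemma dual_elem_pos_m2 : dual (pos m.+2%:Z) = sigma d.
Proof. by rewrite dual_pos ?eqxx ?(gtn_eqF (leqnSn m.+1)) ?add0r //; lia. Qed.

Lemma dual_elem_pos_other t :
  (1 <= t <= n)%N -> t != m -> t != m.+2 -> dual (pos t%:Z) = 0.
Proof. by move=> t_range /negPf tm /negPf tm2; rewrite dual_pos // tm tm2 addr0. Qed.

End DualElem.

Lemma dual_elem_hermitian (c : F) : hermitian_s q s (dual_elem q n s gamma alpha c).
Proof.
apply/(hermitian_sP s n_gt0) => t t_range.
rewrite (_ : n%:Z - t%:Z + 1 = (n - t).+1%:Z); last lia.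
have [->|[->|[t_neq t_neq2]]] : t = m \/ t = m.+2 \/ t != m /\ t != m.+2 by lia.
- rewrite (_ : (n - m).+1 = m.+2); last lia.
  rewrite dual_elem_pos_m2 dual_elem_pos_m.
  by congr (frob q n _ _); congr (_ * _); lia.
- rewrite (_ : (n - m.+2).+1 = m); last lia.
  rewrite dual_elem_pos_m2 dual_elem_pos_m (frob_frob card_F) (frob_id card_F) //.
  by rewrite -mulrDr (_ : _ + _ = (2 * n)%:Z) ?modzMl ?mod0z //; lia.
- by rewrite !dual_elem_pos_other ?(frob0 _ q_pchar) //; lia.
Qed.

Hypothesis two_neq0 : 2%:R != 0 :> F.
Hypothesis gamma_neq0 : gamma != 0.
Hypothesis alpha_anti : alpha ^+ (q ^ n) = - alpha.

Lemma dual_elem_orth (c : F) : c ^+ (q ^ n) = c ->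
  forall g, in_Hs q s gamma g -> pairing q (dual_elem q n s gamma alpha c) g = 0.
Proof.
move=> c_fixed g [a [b [cc [a_fixed [_ ->]]]]].
rewrite pairing_Hs_elem big1_seq => [|i /andP[_]]; last first.
  rewrite mem_index_iota => i_range.
  rewrite (_ : n%:Z - i%:Z + 1 = (n - i).+1%:Z); last lia.
  by rewrite !dual_elem_pos_other ?mul0r ?addr0 //; lia.
have mid0 : dual_elem q n s gamma alpha c (pos m.+1%:Z) = 0.
  by apply: dual_elem_pos_other; lia.
rewrite dual_elem_pos_m dual_elem_pos_m2 mid0 mul0r add0r addr0 -frobM.
rewrite (trq2_add_frob_odd q_pchar card_F _ sigma_odd).
have -> : c / gamma * alpha * (a * gamma) = c * alpha * a by field.
move: a a_fixed; apply/(trq_orth_fixedP q_pchar card_F two_neq0).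
by rewrite exprMn c_fixed alpha_anti mulrN.
Qed.

Hypothesis alpha_neq0 : alpha != 0.

Section Forward.

Variable f : {ffun 'I_n -> F}.
Hypothesis f_herm : hermitian_s q s f.
Hypothesis f_orth : forall g, in_Hs q s gamma g -> pairing q f g = 0.

Let f_herm_at t : (1 <= t <= n)%N -> f (pos (n%:Z - t%:Z + 1)) = tau t%:Z (f (pos t%:Z)).
Proof. exact: (hermitian_sP s n_gt0 q f).1 f_herm t. Qed.
Arguments f_herm_at : clear implicits.

Lemma coef_low_eq0 t : (1 <= t < m)%N -> f (pos t%:Z) = 0.
Proof.
move=> t_range; apply: (trq_mul_eq0 q_pchar card_F) => x.
pose c i := if i == t then x else 0.
have : pairing q f (Hs_elem q n s gamma 0 0 c) = 0.
  by apply: f_orth; exists 0, 0, c; rewrite (exprqn0 q_pchar).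
rewrite pairing_Hs_elem (bigD1_seq t) ?iota_uniq ?mem_index_iota //=.
rewrite big1 => [|i /negPf ti]; last by rewrite /c ti (frob0 _ q_pchar) !mulr0 addr0.
rewrite /c eqxx f_herm_at; last lia.
rewrite -frobM !mul0r (frob0 _ q_pchar) !mulr0 !add0r addr0 trq2_add_frob_odd //.
by apply: s_mulz_odd; lia.
Qed.

Lemma coef_high_eq0 t : (m.+2 < t <= n)%N -> f (pos t%:Z) = 0.
Proof.
move=> t_range; rewrite -[t%:Z](_ : n%:Z - (n - t).+1%:Z + 1 = t%:Z); last lia.
by rewrite f_herm_at ?coef_low_eq0 ?(frob0 _ q_pchar) //; lia.
Qed.

Lemma coef_mid_eq0 : f (pos m.+1%:Z) = 0.
Proof.
have u_fixed : f (pos m.+1%:Z) ^+ (q ^ n) = f (pos m.+1%:Z).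
  have pos_eq : n%:Z - m.+1%:Z + 1 = m.+1%:Z by lia.
  have exp_eq : 2 * n%:Z - 2 * m.+1%:Z + 1 = n%:Z by lia.
  by have := f_herm_at m.+1; rewrite pos_eq exp_eq frob_sn => <- //; lia.
apply: (trq2_fixed_mul_eq0 q_pchar card_F two_neq0 n_odd u_fixed) => b b_fixed.
have : pairing q f (Hs_elem q n s gamma 0 b (fun=> 0)) = 0.
  by apply: f_orth; exists 0, b, (fun=> 0); rewrite (exprqn0 q_pchar).
by rewrite pairing_Hs_elem_ab !mul0r (frob0 _ q_pchar) !mulr0 !addr0.
Qed.

Lemma coef_top : f (pos m.+2%:Z) = sigma (f (pos m%:Z)).
Proof.
have pos_eq : n%:Z - m%:Z + 1 = m.+2%:Z by lia.
have exp_eq : 2 * n%:Z - 2 * m%:Z + 1 = (n + 2)%:Z by lia.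
by have := f_herm_at m; rewrite pos_eq exp_eq => -> //; lia.
Qed.

Lemma coef_base : (f (pos m%:Z) * gamma) ^+ (q ^ n) = - (f (pos m%:Z) * gamma).
Proof.
apply/(trq_orth_fixedP q_pchar card_F two_neq0) => a a_fixed.
have : pairing q f (Hs_elem q n s gamma a 0 (fun=> 0)) = 0.
  by apply: f_orth; exists a, 0, (fun=> 0); rewrite (exprqn0 q_pchar).
rewrite pairing_Hs_elem_ab coef_top -frobM mulr0 add0r.
by rewrite (trq2_add_frob_odd q_pchar card_F _ sigma_odd) mulrA mulrAC.
Qed.

Lemma dual_Hs_eq_dual_elem :
  exists2 c : F, c ^+ (q ^ n) = c & f = dual_elem q n s gamma alpha c.
Proof.
set d := f (pos m%:Z); exists (d * gamma / alpha).
  by rewrite exprMn exprVn coef_base alpha_anti invrN mulrN mulNr opprK.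
apply/ffunP => j; have [t t_range ->] := pos_surj n_gt0 s_coprime_n j.
have dK : d * gamma / alpha / gamma * alpha = d.
  by rewrite [d * gamma / alpha / gamma]mulrAC mulfK // divfK.
have [t_lt|[->|[->|[->|t_gt]]]] : (t < m \/ t = m \/ t = m.+1 \/ t = m.+2 \/ m.+2 < t)%N.
- by lia.
- by rewrite coef_low_eq0 ?dual_elem_pos_other //; lia.
- by rewrite dual_elem_pos_m dK.
- by rewrite coef_mid_eq0 ?dual_elem_pos_other //; lia.
- by rewrite dual_elem_pos_m2 dK coef_top.
- by rewrite coef_high_eq0 ?dual_elem_pos_other //; lia.
Qed.

End Forward.

End DualCode.

Lemma pnat_pchar_card (F : finFieldType) (p k e : nat) :
  prime p -> #|F| = ((p ^ k) ^ e)%N -> [pchar F].-nat (p ^ k)%N.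
Proof.
move=> p_prime card_F; have p_pchar : p \in [pchar F].
  by apply: (@card_finPcharP F p (k * e)); rewrite // card_F expnM.
by rewrite pnatX (eq_pnat _ (pcharf_eq p_pchar)) pnat_id.
Qed.

Lemma natr2_neq0 (F : fieldType) (q : nat) :
  [pchar F].-nat q -> odd q -> (1 < q)%N -> 2%:R != 0 :> F.
Proof.
move=> q_pchar q_odd q_gt1; have p_pchar : pdiv q \in [pchar F].
  by apply: (pnatPpi q_pchar); rewrite pi_pdiv.
apply/negP; rewrite -(dvdn_pcharf p_pchar) dvdn_prime2 ?pdiv_prime // => /eqP p2.
by move: (pdiv_dvd q); rewrite p2 dvdn2 q_odd.
Qed.

Lemma norm_q2n_q0 (F : finFieldType) (q n : nat) :
  (1 < q)%N -> (0 < n)%N -> norm_q2n_q q n (0 : F) = 0.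
Proof.
move=> q_gt1 n_gt0; have e_gt0 : (0 < (q ^ (2 * n) - 1) %/ (q - 1))%N.
  by rewrite divn_gt0 ?subn_gt0 // leq_sub2r // -{1}(expn1 q) leq_exp2l //; lia.
by rewrite /norm_q2n_q expr0n gtn_eqF.
Qed.

Lemma exprqn_signr (F : fieldType) (q : nat) (alpha : F) :
  odd q -> alpha ^+ (q - 1) = -1 -> forall e, alpha ^+ (q ^ e) = (-1) ^+ e * alpha.
Proof.
move=> q_odd alpha_root; have alpha_q : alpha ^+ q = - alpha.
  by rewrite -(subnK (odd_gt0 q_odd)) exprD alpha_root mulN1r.
elim=> [|e IHe]; first by rewrite expr1 mul1r.
rewrite expnSr exprM IHe exprMn alpha_q exprAC -[(-1) ^+ q]signr_odd q_odd expr1.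
by rewrite exprS mulrN mulN1r mulNr.
Qed.

Theorem theorem6p3 (F : finFieldType) (q n : nat) (s : int) (gamma alpha : F) :
  (exists p k : nat, prime p /\ (0 < k)%N /\ q = (p ^ k)%N) ->
  odd q ->
  #|F| = (q ^ (2 * n))%N ->
  odd n -> (3 <= n)%N ->
  coprimez s (2 * n)%:Z ->
  ~ (exists y : F, y ^+ q = y /\ y ^+ 2 = @norm_q2n_q F q n gamma) ->
  alpha ^+ (q - 1) = -1 ->
  forall f : {ffun 'I_n -> F},
    @in_dual_Hs F q n s gamma f <->
    exists c : F, c ^+ (q ^ n) = c /\ f = @dual_elem F q n s gamma alpha c.
Proof.
move=> [p [k [p_prime [k_gt0 q_eq]]]] q_odd card_F n_odd n_ge3 s_coprime gamma_nonsq
  alpha_root f.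
have q_pchar : [pchar F].-nat q.
  by rewrite q_eq (@pnat_pchar_card F p k (2 * n)) // -q_eq.
have q_gt1 : (1 < q)%N by rewrite q_eq -(expn0 p) ltn_exp2l ?prime_gt1.
have two_neq0 := natr2_neq0 q_pchar q_odd q_gt1.
(* The non-square hypothesis on the norm of gamma is only needed for gamma != 0. *)
have gamma_neq0 : gamma != 0.
  apply/eqP => gamma0; apply: gamma_nonsq; exists 0.
  by rewrite gamma0 norm_q2n_q0 ?expr0n ?(gtn_eqF (ltnW q_gt1)) // (leq_trans _ n_ge3).
have alpha_neq0 : alpha != 0.
  apply/eqP => alpha0; move/eqP: alpha_root.
  by rewrite alpha0 expr0n subn_eq0 leqNgt q_gt1 eq_sym oppr_eq0 oner_eq0.
have alpha_anti : alpha ^+ (q ^ n) = - alpha.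
  by rewrite exprqn_signr // -signr_odd n_odd mulN1r.
have n_eq : n = (2 * n./2).+1 by lia.
have m_gt0 : (0 < n./2)%N by lia.
split=> [[f_herm f_orth] | [c [c_fixed ->]]].
  have [c c_fixed ->] := dual_Hs_eq_dual_elem q_pchar card_F n_eq m_gt0 s_coprime
    two_neq0 gamma_neq0 alpha_anti alpha_neq0 f_herm f_orth.
  by exists c.
split; first exact: (dual_elem_hermitian _ _ q_pchar card_F n_eq m_gt0 s_coprime).
exact: (dual_elem_orth q_pchar card_F n_eq m_gt0 s_coprime two_neq0 gamma_neq0 alpha_anti).
Qed.
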